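(* Let $n \geqslant 1$ and $k \geqslant 1$ be integers, and let $U$ be the function defined in the context. Let $A, C \geqslant 0$ be integers with $B := n - A - C \geqslant 0$ and $0 \leqslant A - C < k$. For integers $C'$ and $c$ with $c \equiv C' \pmod{k+1}$ put $l_{C'}(c) = \frac{C' - c}{k+1}$. Then $$U(A, C) - U(A-k, C+k) = \sum_{c \equiv C \ (\mathrm{mod}\ k+1)} \sum_{j \geqslant 0} \binom{l_C(c)}{j} \binom{n}{c+j} \binom{n - c - j - l_C(c) - 1}{B - j} - \sum_{c \equiv C-1 \ (\mathrm{mod}\ k+1)} \sum_{j \geqslant 0} \binom{l_{C-1}(c)}{j} \binom{n}{c+j} \binom{n - c - j - l_{C-1}(c) - 1}{B - j},$$ where the outer sums run over all integers $c$ in the indicated residue class (only finitely many terms are nonzero).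
   Context: Binomial coefficients are generalized: for an integer (possibly negative) $m$ and integer $t$, $\binom{m}{t} = \frac{m(m-1)\cdots(m-t+1)}{t!}$ if $t \geqslant 0$ and $\binom{m}{t} = 0$ if $t < 0$. The multinomial coefficient is $\binom{n}{a, c} = \frac{n!}{a!\, c!\, (n-a-c)!}$ if $a, c, n-a-c \geqslant 0$ and $0$ otherwise. The function $U : \mathbb{Z}^2 \to \mathbb{Z}$ (depending on $n$ and $k$) is defined by: $U(a,c) = 0$ if $a < 0$, $c < 0$ or $n - a - c < 0$; for $a, c, n-a-c \geqslant 0$ with $a \geqslant c$, recursively (in decreasing order of $a$) $$U(a,c) = \binom{n}{a, c} - \binom{n}{a+1, c-1} - U(a+1, c) + U(a+1+k, c-1-k) + U(a+1+k, c-k);$$ and for $a, c, n-a-c \geqslant 0$ with $a < c$, $U(a,c) = U(c,a)$. *)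

From mathcomp Require Import all_boot all_order all_algebra.
Set Implicit Arguments. Unset Strict Implicit. Unset Printing Implicit Defensive.
Import Order.TTheory GRing.Theory Num.Theory.
Local Open Scope ring_scope.

Definition binz (m t : int) : int :=
  if t < 0 then 0
  else ((\prod_(i < absz t) (m - i%:Z)) %/ (absz t)`!%:Z)%Z.

Definition multinom (n : nat) (a c : int) : int :=
  if (0 <= a) && (0 <= c) && (0 <= n%:Z - a - c) then
    ((n`! %/ ((absz a)`! * (absz c)`! * (absz (n%:Z - a - c)%R)`!))%N)%:Z
  else 0.

(* Fuel-based implementation of the recursion defining U; the pair (a,c)
   is first normalised to (max a c, min a c) (symmetry U(a,c) = U(c,a)).
   All recursive calls strictly increase the first coordinate, and
   U vanishes once it exceeds n, so fuel n+1 suffices. *)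
Fixpoint Uaux (n k : nat) (fuel : nat) (a0 c0 : int) : int :=
  match fuel with
  | O => 0
  | S f =>
    if (a0 < 0) || (c0 < 0) || (n%:Z - a0 - c0 < 0) then 0
    else
      let a := Num.max a0 c0 in
      let c := Num.min a0 c0 in
      multinom n a c - multinom n (a + 1) (c - 1)
      - Uaux n k f (a + 1) c
      + Uaux n k f (a + 1 + k%:Z) (c - 1 - k%:Z)
      + Uaux n k f (a + 1 + k%:Z) (c - k%:Z)
  end.

Definition U (n k : nat) (a c : int) : int := Uaux n k n.+1 a c.

Definition lcoef (k : nat) (C' c : int) : int := ((C' - c) %/ (k.+1)%:Z)%Z.

(* Inner sum over j >= 0 (truncated at N; terms with j > B vanish). *)
Definition inner (n k N : nat) (B C' c : int) : int :=
  \sum_(0 <= j < N.+1)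
     binz (lcoef k C' c) j%:Z * binz n%:Z (c + j%:Z)
     * binz (n%:Z - c - j%:Z - lcoef k C' c - 1) (B - j%:Z).

(* Sum over integers c in [-N, N] with c = C' mod (k+1). *)
Definition outer (n k N : nat) (B C' : int) : int :=
  \sum_(0 <= i < (N + N).+1 | ((k.+1)%:Z %| (i%:Z - N%:Z - C'))%Z)
     inner n k N B C' (i%:Z - N%:Z).

From mathcomp Require Import all_boot all_order all_algebra.
From mathcomp Require Import zify ring.
Import Order.TTheory GRing.Theory Num.Theory.
Local Open Scope ring_scope.

(* Let tau(B, q, l) = sum_j C(l, j) C(n, q - l + j) C(n - q - j - 1, B - j), so
   that the inner sum of the statement at c is tau(B, c + l, l) for l = l_C'(c).
   Pascal's rule, applied to C(l + 1, j) and to the last factor, gives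
     tau(B, q, l + 1) + tau(B - 1, q, l + 1)
       = tau(B, q - 1, l) + tau(B - 1, q, l),
   while tau(B, q, 0) + tau(B - 1, q, 0) = C(n, q) C(n - q, B).  With the
   symmetry of trinomial coefficients, induction on B and m then gives the
   reflection tau(B, p, -(m + 1)) = tau(B, n - B - p - 1, m).
   For H(B, C') = sum_(l >= 0) tau(B, C' - l k, l) (half_outer below), the
   first identity makes
   H(B, C') + H(B - 1, C') - H(B, C' - 1 - k) - H(B - 1, C' - k) telescope to
   C(n, C') C(n - C', B), so H(n - a - c, c) - H(n - a - c, c - 1) satisfies the
   recursion of U(a, c) and equals U(a, c) for a >= c.  By the reflection, the
   terms of the outer sum with c > C' add up to H(B, n - B - C' - k - 1), and
   the theorem becomes an identity between four values of H. *)

Definition ffactz (m : int) (t : nat) : int := \prod_(i < t) (m - i%:Z).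

Lemma ffactz0 (m : int) : ffactz m 0 = 1.
Proof. by rewrite /ffactz big_ord0. Qed.

Lemma ffactzSr (m : int) (t : nat) : ffactz m t.+1 = ffactz m t * (m - t%:Z).
Proof. by rewrite /ffactz big_ord_recr. Qed.

Lemma ffactzS (m : int) (t : nat) : ffactz m t.+1 = m * ffactz (m - 1) t.
Proof.
rewrite /ffactz big_ord_recl subr0; congr (_ * _).
by apply: eq_bigr => i _; rewrite /= /bump /= PoszD; ring.
Qed.

Lemma ffactz_nat (M t : nat) : ffactz M%:Z t = (M ^_ t)%:Z.
Proof.
elim: t => [|t IHt]; first by rewrite ffactz0.
rewrite ffactzSr IHt ffactnSr.
have [le_tM|lt_Mt] := leqP t M; first by rewrite PoszM subzn.
by rewrite ffact_small ?mul0r.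
Qed.

Lemma ffactzN (m : int) (t : nat) :
  ffactz m t = (-1) ^+ t * ffactz (t%:Z - 1 - m) t.
Proof.
elim: t m => [|t IHt] m; first by rewrite !ffactz0 expr0 mul1r.
rewrite ffactzSr IHt ffactzS exprS -addn1 PoszD.
have -> : t%:Z + 1%N - 1 - m - 1 = t%:Z - 1 - m by ring.
ring.
Qed.

Lemma ffactz_binz (m : int) (t : nat) : ffactz m t = binz m t%:Z * (t`!)%:Z.
Proof.
have [x ffactzE] : exists x, ffactz m t = x * (t`!)%:Z.
  have binE (M : nat) : ffactz M%:Z t = 'C(M, t)%:Z * (t`!)%:Z.
    by rewrite ffactz_nat -PoszM -bin_ffact.
  have [m_ge0|m_lt0] := lerP 0 m.
    by exists 'C(`|m|%N, t)%:Z; rewrite -binE gez0_abs.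
  exists ((-1) ^+ t * 'C(absz (t%:Z - 1 - m)%R, t)%:Z).
  by rewrite ffactzN -mulrA -binE gez0_abs //; lia.
rewrite /binz ltNge /= -/(ffactz m t) ffactzE mulzK //.
by rewrite eqz_nat -lt0n fact_gt0.
Qed.

Lemma binz_lt0 (m t : int) : t < 0 -> binz m t = 0.
Proof. by rewrite /binz => ->. Qed.

Lemma binz0 (m : int) : binz m 0 = 1.
Proof. by have := ffactz_binz m 0; rewrite ffactz0 fact0 mulr1. Qed.

Lemma binz_nat (M t : nat) : binz M%:Z t%:Z = 'C(M, t)%:Z.
Proof.
apply: (@mulIf _ (t`!)%:Z); first by rewrite eqz_nat -lt0n fact_gt0.
by rewrite -ffactz_binz ffactz_nat -bin_ffact PoszM.
Qed.

Lemma binz_small (M : nat) (t : int) : M%:Z < t -> binz M%:Z t = 0.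
Proof. by case: t => // t lt_Mt; rewrite binz_nat bin_small. Qed.

Lemma binz_pascal (m t : int) :
  binz m t = binz (m - 1) t + binz (m - 1) (t - 1).
Proof.
have [t_lt0|] := ltrP t 0; first by rewrite !binz_lt0 ?addr0 //; lia.
case: t => // -[_|t _]; first by rewrite !binz0 binz_lt0 ?addr0.
have -> : t.+1%:Z - 1 = t%:Z by lia.
apply: (@mulIf _ (t.+1`!)%:Z); first by rewrite eqz_nat -lt0n fact_gt0.
rewrite mulrDl -!ffactz_binz factS PoszM mulrCA -ffactz_binz ffactzS ffactzSr.
ring.
Qed.

Lemma multinom_sym (n : nat) (a c : int) : multinom n a c = multinom n c a.
Proof.
rewrite /multinom (addrAC _ (- a)) (andbC (0 <= a)).
by rewrite [((absz a)`! * _)%N]mulnC.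
Qed.

Lemma fact_trinomial (a c b : nat) :
  (a + c + b)`! = ('C(a + c + b, c) * 'C(a + b, b) * (a`! * c`! * b`!))%N.
Proof.
have := @bin_fact (a + c + b) c; rewrite (addnAC a) addnK => <-; last by lia.
have := @bin_fact (a + b) b; rewrite addnK => <-; last by lia.
ring.
Qed.

Lemma multinomE (n : nat) (a c B : int) : a + c + B = n%:Z -> 0 <= B ->
  multinom n a c = binz n%:Z c * binz (n%:Z - c) B.
Proof.
move=> sum_n; case: B sum_n => // b sum_n _.
have [c_lt0|] := ltrP c 0.
  by rewrite /multinom binz_lt0 // mul0r ifF //; lia.
case: c sum_n => // c sum_n _.
have [le_cn|lt_nc] := leqP c n; last first.
  rewrite binz_small ?mul0r; last by lia.
  by rewrite /multinom ifF //; lia.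
have nBc : n%:Z - c%:Z = (n - c)%N by rewrite subzn.
have [le_b|lt_b] := leqP b (n - c); last first.
  rewrite nBc (@binz_small (n - c)) ?mulr0; last by lia.
  by rewrite /multinom ifF //; lia.
have [a' -> n_eq] : exists2 a' : nat, a = a' & n = (a' + c + b)%N.
  by exists (n - c - b)%N; lia.
rewrite /multinom ifT; last by lia.
rewrite nBc !binz_nat -PoszM; congr Posz; subst n.
have -> : absz ((a' + c + b)%N%:Z - a'%:Z - c%:Z)%R = b by lia.
rewrite fact_trinomial mulnK ?muln_gt0 ?fact_gt0 //.
by have -> : (a' + c + b - c = a' + b)%N by lia.
Qed.

Lemma binz_trinomial (n : nat) (B s : int) : 0 <= B ->
  binz n%:Z (n%:Z - B - s) * binz (B + s) B = binz n%:Z s * binz (n%:Z - s) B.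
Proof.
move=> B_ge0.
rewrite -(@multinomE n (n%:Z - B - s) s B) //; last by ring.
rewrite multinom_sym (@multinomE n s (n%:Z - B - s) B) //; last by ring.
by congr (_ * binz _ _); ring.
Qed.

Section Tau.

Variables n J : nat.

(* Terms with j > B vanish, so the truncation at J is harmless once B < J. *)
Definition tau (B q l : int) : int :=
  \sum_(0 <= j < J) binz l j%:Z * binz n%:Z (q - l + j%:Z)
                    * binz (n%:Z - q - j%:Z - 1) (B - j%:Z).

Lemma tau_Bneg (B q l : int) : B < 0 -> tau B q l = 0.
Proof.
move=> B_lt0; rewrite /tau big1 // => j _.
by rewrite [binz _ (B - _)]binz_lt0 ?mulr0 //; lia.
Qed.

Lemma tau_qneg (B q : int) (l : nat) : q < 0 -> tau B q l%:Z = 0.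
Proof.
move=> q_lt0; rewrite /tau big1 // => j _.
have [le_jl|lt_lj] := leqP j l; last by rewrite binz_small ?mul0r.
by rewrite [binz n%:Z _]binz_lt0 ?mulr0 ?mul0r //; lia.
Qed.

Hypothesis J_gt0 : (0 < J)%N.

Lemma tau_l0 (B q : int) : tau B q 0 = binz n%:Z q * binz (n%:Z - q - 1) B.
Proof.
rewrite /tau (big_ltn J_gt0) big1_seq ?addr0 => [|j /andP[_]].
  by rewrite binz0 mul1r; congr (binz _ _ * binz _ _); ring.
by rewrite mem_index_iota => /andP[j_gt0 _]; rewrite (@binz_small 0) ?mul0r.
Qed.

Lemma tau_l0_pair (B q : int) :
  tau B q 0 + tau (B - 1) q 0 = binz n%:Z q * binz (n%:Z - q) B.
Proof. by rewrite !tau_l0 [binz (n%:Z - q) B]binz_pascal; ring. Qed.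

Lemma tau_pascal (B q l : int) : B < J%:Z ->
  tau B q (l + 1) + tau (B - 1) q (l + 1) = tau B (q - 1) l + tau (B - 1) q l.
Proof.
move=> lt_BJ.
pose g (j : nat) := binz l (j%:Z - 1) * binz n%:Z (q - (l + 1) + j%:Z)
                    * binz (n%:Z - q - j%:Z) (B - j%:Z).
have -> : tau (B - 1) q l = \sum_(0 <= j < J) g j.
  rewrite /tau -(prednK J_gt0) big_nat_recr //= [RHS]big_nat_recl //.
  rewrite [binz _ (B - 1 - _)]binz_lt0 ?mulr0 ?addr0; last by lia.
  rewrite /g binz_lt0 // !mul0r add0r; apply: eq_bigr => j _.
  by congr (binz _ _ * binz _ _ * binz _ _); lia.
rewrite /tau -!big_split; apply: eq_bigr => j _ /=; rewrite /g.
rewrite -mulrDr (_ : B - 1 - j%:Z = B - j%:Z - 1); last by ring.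
rewrite -binz_pascal binz_pascal addrK mulrDl mulrDl; congr (_ + _).
by congr (_ * binz _ _ * binz _ _); ring.
Qed.

Lemma tau_reflect (B p : int) (m : nat) : B < J%:Z ->
  tau B p (- m.+1%:Z) = tau B (n%:Z - B - p - 1) m%:Z.
Proof.
have [b lt_Bb] : exists b : nat, B < b%:Z by exists (absz B).+1; lia.
elim: b B lt_Bb m p => [|b IHb] B lt_Bb m p lt_BJ.
  by rewrite !tau_Bneg.
have [B_lt0|B_ge0] := ltrP B 0; first by rewrite !tau_Bneg.
have IHB m' p' := IHb (B - 1) ltac:(lia) m' p' ltac:(lia).
have reflect_q (p' : int) : n%:Z - (B - 1) - (p' + 1) - 1 = n%:Z - B - p' - 1.
  by ring.
elim: m p => [|m IHm] p.
  have := tau_pascal B (p + 1) (-1) lt_BJ.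
  rewrite addNr addrK tau_l0_pair IHB reflect_q.
  move=> /eqP; rewrite -subr_eq => /eqP <-.
  apply/eqP; rewrite subr_eq tau_l0_pair -binz_trinomial //.
  by apply/eqP; congr (binz _ _ * binz _ _); ring.
have := tau_pascal B (p + 1) (- m.+2%:Z) lt_BJ.
rewrite (_ : - m.+2%:Z + 1 = - m.+1%:Z) ?addrK; last by lia.
rewrite IHm !IHB !reflect_q => /eqP; rewrite -subr_eq => /eqP <-.
rewrite (_ : n%:Z - B - (p + 1) - 1 = n%:Z - B - p - 1 - 1); last by ring.
by rewrite -tau_pascal // -addn1 PoszD addrK.
Qed.

End Tau.

Lemma Uaux_sym (n k f : nat) (a c : int) : Uaux n k f a c = Uaux n k f c a.
Proof.
by case: f => //= f; rewrite maxC minC [(a < 0) || _]orbC (addrAC _ (- a)).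
Qed.

Section HalfOuter.

Variables n k J L : nat.

Definition half_outer (B C' : int) : int :=
  \sum_(0 <= l < L) tau n J B (C' - l%:Z * k%:Z) l%:Z.

Lemma half_outer_Bneg (B C' : int) : B < 0 -> half_outer B C' = 0.
Proof.
by move=> B_lt0; rewrite /half_outer big1 // => l _; rewrite tau_Bneg.
Qed.

Lemma half_outer_Cneg (B C' : int) : C' < 0 -> half_outer B C' = 0.
Proof.
move=> C_lt0; rewrite /half_outer big1 // => l _; rewrite tau_qneg //.
by have : 0 <= l%:Z * k%:Z by []; lia.
Qed.

Definition U_closed (a c : int) : int :=
  half_outer (n%:Z - a - c) c - half_outer (n%:Z - a - c) (c - 1).

Lemma U_closed_out (a c : int) : c < 0 \/ n%:Z - a - c < 0 -> U_closed a c = 0.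
Proof.
rewrite /U_closed => -[c_lt0|B_lt0]; last by rewrite !half_outer_Bneg ?subr0.
by rewrite !half_outer_Cneg ?subr0 //; lia.
Qed.

Hypotheses (J_gt0 : (0 < J)%N) (k_gt0 : (0 < k)%N).

Lemma half_outer_telescope (B C' : int) : B < J%:Z -> C' < L%:Z ->
  half_outer B C' + half_outer (B - 1) C'
  - half_outer B (C' - 1 - k%:Z) - half_outer (B - 1) (C' - k%:Z)
  = binz n%:Z C' * binz (n%:Z - C') B.
Proof.
move=> lt_BJ lt_CL.
pose psi (l : nat) := tau n J B (C' - l%:Z * k%:Z) l%:Z
                      + tau n J (B - 1) (C' - l%:Z * k%:Z) l%:Z.
have psi_shift : half_outer B (C' - 1 - k%:Z) + half_outer (B - 1) (C' - k%:Z)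
                 = \sum_(0 <= l < L) psi l.+1.
  rewrite /half_outer -big_split; apply: eq_bigr => l _.
  rewrite /psi -addn1 PoszD tau_pascal //.
  by congr (tau _ _ _ _ _ + tau _ _ _ _ _); ring.
have psi_L : psi L = 0.
  have : L%:Z <= L%:Z * k%:Z by rewrite ler_peMr //; lia.
  by move=> le_L_Lk; rewrite /psi !tau_qneg ?addr0 //; lia.
rewrite -addrA -opprD psi_shift.
have -> : half_outer B C' + half_outer (B - 1) C' = \sum_(0 <= l < L) psi l.
  by rewrite -big_split.
rewrite -opprB -sumrB telescope_sumr // psi_L sub0r opprK.
by rewrite /psi mul0r subr0 tau_l0_pair.
Qed.

Lemma U_closed_rec (a c : int) :
  0 <= c -> 0 <= n%:Z - a - c -> n%:Z - a - c < J%:Z -> c < L%:Z ->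
  U_closed a c = multinom n a c - multinom n (a + 1) (c - 1)
    - U_closed (a + 1) c + U_closed (a + 1 + k%:Z) (c - 1 - k%:Z)
    + U_closed (a + 1 + k%:Z) (c - k%:Z).
Proof.
move=> c_ge0 B_ge0 lt_BJ lt_cL; set B := n%:Z - a - c.
rewrite (@multinomE n a c B) ?(@multinomE n (a + 1) (c - 1) B) //;
  try by rewrite /B; ring.
rewrite -half_outer_telescope // -half_outer_telescope //; last by lia.
rewrite /U_closed.
have -> : n%:Z - (a + 1) - c = B - 1 by rewrite /B; ring.
have -> : n%:Z - (a + 1 + k%:Z) - (c - 1 - k%:Z) = B by rewrite /B; ring.
have -> : n%:Z - (a + 1 + k%:Z) - (c - k%:Z) = B - 1 by rewrite /B; ring.
have -> : c - 1 - k%:Z - 1 = c - 1 - 1 - k%:Z by ring.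
have -> : c - k%:Z - 1 = c - 1 - k%:Z by ring.
ring.
Qed.

Lemma Uaux_U_closed (f : nat) (a c : int) :
  (n < J)%N -> (n < L)%N -> c <= a -> n%:Z < a + f%:Z ->
  Uaux n k f a c = U_closed a c.
Proof.
move=> lt_nJ lt_nL; elim: f a c => [|f IHf] a c le_ca lt_n_fuel /=.
  by rewrite U_closed_out //; lia.
case: ifP => [out|/negbT]; first by rewrite U_closed_out //; lia.
rewrite !negb_or -!leNgt => /andP[/andP[a_ge0 c_ge0] B_ge0].
rewrite (max_idPl le_ca) (min_idPr le_ca) !IHf; try lia.
by rewrite (U_closed_rec a c); lia.
Qed.

End HalfOuter.

Lemma sum_nat_indicator (L : nat) (y : int) (F : nat -> int) :
  \sum_(0 <= l < L) (if l%:Z == y then F l else 0)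
  = if (0 <= y) && (y < L%:Z) then F (absz y) else 0.
Proof.
rewrite -big_mkcond /=; case: y => [y|y] /=.
  by rewrite (eq_bigl (fun l => l == y)) ?big_nat1_eq // => l; rewrite eqz_nat.
by rewrite big_pred0.
Qed.

Lemma dvdz_indicator (d L : nat) (x v : int) : (0 < d)%N -> `|x| < L%:Z ->
  (if (d%:Z %| x)%Z then v else 0)
  = \sum_(0 <= l < L) (if x == - (l%:Z * d%:Z) then v else 0)
  + \sum_(0 <= m < L) (if x == m.+1%:Z * d%:Z then v else 0).
Proof.
move=> d_gt0 lt_xL.
have [/dvdzP[t x_eq]|ndvd] := boolP (d%:Z %| x)%Z; last first.
  rewrite !big1 ?addr0 // => l _; case: eqP => // x_eq; case/negP: ndvd;
    by rewrite x_eq -?mulNr dvdz_mull.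
subst x; have d_neq0 : d%:Z != 0 by rewrite eqz_nat -lt0n.
have t_small : `|t| < L%:Z.
  by apply: le_lt_trans lt_xL; rewrite normrM ler_peMr // gez0_abs //; lia.
rewrite (eq_bigr (fun l => if l%:Z == - t then v else 0)); last first.
  by move=> l _; rewrite -mulNr (inj_eq (mulIf d_neq0)) eq_sym eqr_oppLR.
rewrite [X in _ + X](eq_bigr (fun m => if m%:Z == t - 1 then v else 0));
  last first.
  move=> m _; rewrite (inj_eq (mulIf d_neq0)) eq_sym.
  by congr (if _ then _ else _); apply/eqP/eqP; lia.
by rewrite !sum_nat_indicator; case: ifP; case: ifP; lia.
Qed.

Lemma sum_shift_indicator (N : nat) (f : int -> int) (c : int) :
  (forall x, N%:Z < `|x| -> f x = 0) ->
  \sum_(0 <= i < (N + N).+1) (if i%:Z - N%:Z == c then f (i%:Z - N%:Z) else 0)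
  = f c.
Proof.
move=> f_out.
rewrite (eq_bigr (fun i => if i%:Z == c + N%:Z then f c else 0)); last first.
  move=> i _; rewrite (_ : (i%:Z - N%:Z == c) = (i%:Z == c + N%:Z)); last first.
    by apply/eqP/eqP; lia.
  by case: eqP => // ->; rewrite addrK.
by rewrite sum_nat_indicator; case: ifP => // c_out; rewrite f_out //; lia.
Qed.

Lemma sum_dvdz_split (N L d : nat) (f : int -> int) (C' : int) : (0 < d)%N ->
  (forall x, N%:Z < `|x| -> f x = 0) -> N%:Z + `|C'| < L%:Z ->
  \sum_(0 <= i < (N + N).+1 | (d%:Z %| i%:Z - N%:Z - C')%Z) f (i%:Z - N%:Z)
  = \sum_(0 <= l < L) f (C' - l%:Z * d%:Z)
  + \sum_(0 <= m < L) f (C' + m.+1%:Z * d%:Z).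
Proof.
move=> d_gt0 f_out lt_CL.
rewrite big_mkcond /= (eq_big_nat _ _ (F2 := fun i =>
    \sum_(0 <= l < L) (if i%:Z - N%:Z - C' == - (l%:Z * d%:Z)
                       then f (i%:Z - N%:Z) else 0)
  + \sum_(0 <= m < L) (if i%:Z - N%:Z - C' == m.+1%:Z * d%:Z
                       then f (i%:Z - N%:Z) else 0))); last first.
  by move=> i /andP[_ lt_i]; apply: dvdz_indicator => //; lia.
rewrite big_split /= !(exchange_big_nat _ 0 (N + N).+1 0 L) /=.
congr (_ + _); apply: eq_bigr => l _.
  all: rewrite -(@sum_shift_indicator N f _ f_out); apply: eq_bigr => i _.
  all: by congr (if _ then _ else _); apply/eqP/eqP; lia.
Qed.

Lemma inner_tau (n k N : nat) (B C' l : int) :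
  inner n k N B C' (C' - l * k.+1%:Z) = tau n N.+1 B (C' - l * k%:Z) l.
Proof.
rewrite /inner /tau /lcoef.
rewrite (_ : C' - (C' - l * k.+1%:Z) = l * k.+1%:Z); last by ring.
rewrite mulzK //; apply: eq_bigr => j _.
by congr (_ * binz _ _ * binz _ _); rewrite -addn1 PoszD; ring.
Qed.

Lemma inner_out (n k N : nat) (B C' c : int) : (n <= N)%N -> N%:Z < `|c| ->
  inner n k N B C' c = 0.
Proof.
move=> le_nN lt_Nc; rewrite /inner big_nat big1 // => j /andP[_ lt_jN].
have [c_lt0|c_ge0] := ltrP c 0.
  by rewrite [binz n%:Z _]binz_lt0 ?mulr0 ?mul0r //; lia.
move: lt_Nc; rewrite ger0_norm // => lt_Nc.
by rewrite [binz n%:Z _]binz_small ?mulr0 ?mul0r //; lia.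
Qed.

Lemma outer_half_outer (n k N L : nat) (B C' : int) :
  (n <= N)%N -> B <= N%:Z -> N%:Z + `|C'| < L%:Z ->
  outer n k N B C' = half_outer n k N.+1 L B C'
                   + half_outer n k N.+1 L B (n%:Z - B - C' - k%:Z - 1).
Proof.
move=> le_nN le_BN lt_CL.
rewrite /outer (@sum_dvdz_split N L k.+1) // => [|x]; last exact: inner_out.
rewrite /half_outer; congr (_ + _); apply: eq_bigr => m _.
  exact: inner_tau.
rewrite (_ : C' + m.+1%:Z * k.+1%:Z = C' - (- m.+1%:Z) * k.+1%:Z); last by ring.
rewrite inner_tau tau_reflect //.
by congr tau; rewrite -addn1 PoszD; ring.
Qed.

Theorem lemma4p21 (n k : nat) (A C : int) :
  (1 <= n)%N -> (1 <= k)%N ->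
  0 <= A -> 0 <= C -> 0 <= n%:Z - A - C ->
  0 <= A - C -> A - C < k%:Z ->
  forall N : nat, (n <= N)%N ->
  U n k A C - U n k (A - k%:Z) (C + k%:Z) =
    outer n k N (n%:Z - A - C) C - outer n k N (n%:Z - A - C) (C - 1).
Proof.
move=> n_gt0 k_gt0 A_ge0 C_ge0 B_ge0 le_CA lt_AC_k N le_nN.
rewrite /U (Uaux_sym _ _ _ (A - k%:Z)).
rewrite !(@Uaux_U_closed n k N.+1 (N + n).+1); try lia.
rewrite !(@outer_half_outer n k N (N + n).+1) //; try lia.
rewrite /U_closed.
have -> : n%:Z - (C + k%:Z) - (A - k%:Z) = n%:Z - A - C by ring.
have -> : n%:Z - (n%:Z - A - C) - C - k%:Z - 1 = A - k%:Z - 1 by ring.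
have -> : n%:Z - (n%:Z - A - C) - (C - 1) - k%:Z - 1 = A - k%:Z by ring.
ring.
Qed.
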